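(* If $n\ge 1$ and $k\ge 2$ are integers, then the diameter of the $k$-Pell graph $\Pi_{n,k}$ is $$\operatorname{diam}(\Pi_{n,k})=nk-\left\lceil \frac{n}{2}\right\rceil.$$
   Context: For an integer $k\ge 2$, a $k$-Pell string is a finite word over the alphabet $\{0,1,\ldots,k-1,kk\}$, i.e. a word over $\{0,1,\ldots,k\}$ in which every maximal run of the letter $k$ has even length. For $n\ge 0$, the $k$-Pell graph $\Pi_{n,k}$ has as vertices all $k$-Pell strings of length $n$, and two vertices are adjacent if one is obtained from the other either by replacing a single letter $i$ by $i+1$ (or vice versa) for some $i\in\{0,1,\ldots,k-2\}$, or by replacing one factor $(k-1)(k-1)$ by $kk$ (or vice versa), in such a way that the resulting string is again a $k$-Pell string. *)

From mathcomp Require Import all_boot.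
Set Implicit Arguments. Unset Strict Implicit. Unset Printing Implicit Defensive.

(* A k-Pell string: a word over {0,...,k-1, kk}, i.e. a word over {0,...,k}
   parsed letter by letter where each letter k must be followed by another k
   (the pair kk forming one block). *)
Fixpoint is_pell (k : nat) (s : seq nat) : bool :=
  match s with
  | [::] => true
  | a :: t =>
      if a < k then is_pell k t
      else if a == k then
        (match t with
         | b :: t' => (b == k) && is_pell k t'
         | [::] => false
         end)
      else false
  end.

Definition pell_vertex (n k : nat) (s : seq nat) : Prop :=
  is_pell k s /\ size s = n.

Definition pell_step1 (k : nat) (s t : seq nat) : Prop :=
  exists (a b : seq nat) (x y : nat),
    s = a ++ x :: b /\ t = a ++ y :: b /\
    (y = x.+1 \/ x = y.+1) /\ maxn x y <= k - 1.

Definition pell_step2 (k : nat) (s t : seq nat) : Prop :=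
  exists a b : seq nat,
    (s = a ++ [:: k.-1; k.-1] ++ b /\ t = a ++ [:: k; k] ++ b) \/
    (s = a ++ [:: k; k] ++ b /\ t = a ++ [:: k.-1; k.-1] ++ b).

Definition pell_adj (k : nat) (s t : seq nat) : Prop :=
  is_pell k s /\ is_pell k t /\ (pell_step1 k s t \/ pell_step2 k s t).

Inductive walk (k : nat) : seq nat -> seq nat -> nat -> Prop :=
  | walk0 u : walk k u u 0
  | walkS u w v m : pell_adj k u w -> walk k w v m -> walk k u v m.+1.

Definition dist_le (k : nat) (u v : seq nat) (m : nat) : Prop :=
  exists2 m', m' <= m & walk k u v m'.

(* diam(Pi_{n,k}) = d : d is the least m such that all pairs of vertices are
   at distance at most m (i.e. the maximum of the distances). *)
Definition pell_diam_is (n k d : nat) : Prop :=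
  forall m : nat,
    (forall u v, pell_vertex n k u -> pell_vertex n k v -> dist_le k u v m)
    <-> d <= m.

From mathcomp Require Import all_boot zify.
Set Implicit Arguments. Unset Strict Implicit. Unset Printing Implicit Defensive.

(* Upper bound: a vertex u reaches its lowering (every block kk replaced by
   (k-1)(k-1)) in #k(u)/2 steps, and two strings over {0..k-1} are joined by a
   walk of length their l1-distance.  Position by position,
   #k(u_i) + #k(v_i) + 2|low u_i - low v_i| <= 2k-1, so twice the distance is at
   most n(2k-1).  Lower bound: the weight counting a letter x < k as 2x and a
   letter k as 2k-1 changes by at most 2 along an edge, and it separates 0^n
   from (k-1)^(n mod 2) (kk)^(n/2) by 2(nk - ceil(n/2)). *)

Section PellStrings.
Variable k : nat.

Lemma is_pell_cons_kk t : is_pell k [:: k, k & t] = is_pell k t.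
Proof. by rewrite /= ltnn eqxx. Qed.

Lemma is_pell_ind (P : seq nat -> Prop) :
  P [::] ->
  (forall a t, a < k -> is_pell k t -> P t -> P (a :: t)) ->
  (forall t, is_pell k t -> P t -> P [:: k, k & t]) ->
  forall s, is_pell k s -> P s.
Proof.
move=> P0 Plt Pkk s; have [N] := ubnP (size s).
elim: N s => // N IH [|a t] //= size_lt.
case: ltnP => [a_lt_k t_pell|_]; first by apply: Plt => //; apply: IH.
case: eqP => // ->; case: t size_lt => // b t /= size_lt /andP[/eqP -> t_pell].
by apply: Pkk => //; apply: IH => //; lia.
Qed.

Lemma is_pell_cat s t : is_pell k s -> is_pell k t -> is_pell k (s ++ t).
Proof.
move=> s_pell t_pell; move: s s_pell.
apply: is_pell_ind => //= [a s a_lt_k _ ->|s _ ->].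
  by rewrite a_lt_k.
by rewrite ltnn eqxx.
Qed.

Lemma is_pell_leq s : is_pell k s -> all (fun x => x <= k) s.
Proof.
move: s; apply: is_pell_ind => //= [a t a_lt_k _ ->|t _ ->]; first by rewrite ltnW.
by rewrite leqnn.
Qed.

Lemma is_pell_ltn s : all (fun x => x < k) s -> is_pell k s.
Proof. by elim: s => //= a s IH /andP[-> /IH]. Qed.

Lemma pell_adj_sym s t : pell_adj k s t -> pell_adj k t s.
Proof.
case=> s_pell [t_pell [[a [b [x [y [s_eq [t_eq [xy xy_le]]]]]]]|[a [b ab]]]];
  do 2 (split=> //).
  left; exists a, b, y, x; rewrite maxnC; do 3 (split=> //).
  by case: xy; [right|left].
by right; exists a, b; case: ab => [[-> ->]|[-> ->]]; [right|left].
Qed.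

Lemma pell_adj_cat p q s t : is_pell k p -> is_pell k q -> pell_adj k s t ->
  pell_adj k (p ++ s ++ q) (p ++ t ++ q).
Proof.
move=> p_pell q_pell [s_pell [t_pell step]].
do 2 (split; first by do 2 apply: is_pell_cat => //).
case: step => [[a [b [x [y [-> [-> xy]]]]]]|[a [b ab]]].
  by left; exists (p ++ a), (b ++ q), x, y; rewrite -!catA.
right; exists (p ++ a), (b ++ q).
by case: ab => [[-> ->]|[-> ->]]; [left|right]; rewrite -!catA.
Qed.

Lemma walk_trans u w v m1 m2 :
  walk k u w m1 -> walk k w v m2 -> walk k u v (m1 + m2).
Proof.
elim=> // {}u w' {}w m u_w' _ IH w_v.
by rewrite addSn; apply: walkS u_w' (IH w_v).
Qed.

Lemma walk_sym u v m : walk k u v m -> walk k v u m.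
Proof.
elim=> [u'|u' w v' m' u_w _ IH]; first exact: walk0.
by rewrite -addn1; apply: walk_trans IH (walkS (pell_adj_sym u_w) (walk0 _ _)).
Qed.

Lemma walk_cat p q s t m : is_pell k p -> is_pell k q -> walk k s t m ->
  walk k (p ++ s ++ q) (p ++ t ++ q) m.
Proof.
move=> p_pell q_pell; elim=> [s'|s' w t' m' s_w _ IH]; first exact: walk0.
exact: walkS (pell_adj_cat p_pell q_pell s_w) IH.
Qed.

Lemma walk_cons a s t m : a < k -> walk k s t m -> walk k (a :: s) (a :: t) m.
Proof.
move=> a_lt_k /(walk_cat (p := [:: a]) (q := [::])).
by rewrite !cats0; apply; rewrite //= a_lt_k.
Qed.

Lemma walk_letter_addn a d : a + d < k -> walk k [:: a] [:: a + d] d.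
Proof.
elim: d a => [|d IH] a ad_lt_k; first by rewrite addn0; apply: walk0.
apply: (@walkS _ _ [:: a.+1]); last by rewrite -addSnnS; apply: IH; lia.
do 2 (split; first by apply: is_pell_ltn => /=; lia).
by left; exists [::], [::], a, a.+1; do 3 split=> //; [left|lia].
Qed.

Lemma walk_letter a b : a < k -> b < k -> walk k [:: a] [:: b] (a - b + (b - a)).
Proof.
move=> a_lt_k b_lt_k; case: (leqP a b) => [a_le_b|b_lt_a].
  rewrite (_ : a - b = 0) ?add0n; last lia.
  by rewrite -{1}(subnKC a_le_b); apply: walk_letter_addn; lia.
rewrite (_ : b - a = 0) ?addn0; last lia.
apply: walk_sym; rewrite -{1}(subnKC (ltnW b_lt_a)); apply: walk_letter_addn; lia.
Qed.

Fixpoint l1_dist (x y : seq nat) : nat :=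
  match x, y with
  | a :: x', b :: y' => a - b + (b - a) + l1_dist x' y'
  | _, _ => 0
  end.

Lemma walk_l1_dist x y : all (fun z => z < k) x -> all (fun z => z < k) y ->
  size x = size y -> walk k x y (l1_dist x y).
Proof.
elim: x y => [|a x IH] [|b y] //= => [*|]; first exact: walk0.
move=> /andP[a_lt_k x_lt] /andP[b_lt_k y_lt] [size_xy].
have ax_bx := walk_cat (p := [::]) isT (is_pell_ltn x_lt) (walk_letter a_lt_k b_lt_k).
exact: walk_trans ax_bx (walk_cons b_lt_k (IH y x_lt y_lt size_xy)).
Qed.

Definition lower_blocks (s : seq nat) : seq nat :=
  map (fun x => if x == k then k.-1 else x) s.

Definition letter_weight (x : nat) : nat := if x == k then k.*2.-1 else x.*2.

Definition pell_weight (s : seq nat) : nat := sumn (map letter_weight s).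

Lemma letter_weight_ltn x : x < k -> letter_weight x = x.*2.
Proof. by rewrite /letter_weight => x_lt_k; case: eqP => // x_eq; lia. Qed.

Lemma letter_weight_k : letter_weight k = k.*2.-1.
Proof. by rewrite /letter_weight eqxx. Qed.

Lemma pell_weight_nseq m x : pell_weight (nseq m x) = m * letter_weight x.
Proof. by rewrite /pell_weight map_nseq sumn_nseq mulnC. Qed.

Lemma pell_weight_cons x s : pell_weight (x :: s) = letter_weight x + pell_weight s.
Proof. by []. Qed.

Lemma pell_weight_cat s t : pell_weight (s ++ t) = pell_weight s + pell_weight t.
Proof. by rewrite /pell_weight map_cat sumn_cat. Qed.

Hypothesis k_gt0 : 0 < k.

Lemma lower_blocks_ltn s : all (fun x => x <= k) s -> all (fun x => x < k) (lower_blocks s).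
Proof. by elim: s => //= a s IH /andP[a_le_k /IH ->]; case: eqP; lia. Qed.

Lemma walk_lower_blocks s : is_pell k s -> walk k s (lower_blocks s) (count_mem k s)./2.
Proof.
move: s; apply: is_pell_ind => [|a t a_lt_k _ IH|t t_pell IH]; first exact: walk0.
  by rewrite /= (_ : (a == k) = false) //=; [apply: walk_cons | apply/eqP; lia].
have km1_pell : is_pell k [:: k.-1; k.-1] by apply: is_pell_ltn => /=; lia.
rewrite /= eqxx /=; apply: (@walkS _ _ [:: k.-1, k.-1 & t]).
  split; first by rewrite is_pell_cons_kk.
  split; first exact: is_pell_cat km1_pell t_pell.
  by right; exists [::], t; right.
by have := walk_cat km1_pell (isT : is_pell k [::]) IH; rewrite !cats0.
Qed.

Lemma pell_weight_adj s t : pell_adj k s t -> pell_weight t <= pell_weight s + 2.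
Proof.
have weight_km1 : letter_weight k.-1 = k.-1.*2 by apply: letter_weight_ltn; lia.
case=> _ [_ [[a [b [x [y [-> [-> [xy xy_le]]]]]]]|[a [b [[-> ->]|[-> ->]]]]]];
  rewrite !pell_weight_cat !pell_weight_cons ?weight_km1 ?letter_weight_k; [|lia|lia].
by rewrite !letter_weight_ltn; lia.
Qed.

Lemma pell_weight_walk u v m : walk k u v m -> pell_weight v <= pell_weight u + m.*2.
Proof.
elim=> [u'|u' w v' m' u_w _ IH]; first by rewrite addn0.
by have := pell_weight_adj u_w; lia.
Qed.

End PellStrings.

Lemma count_l1_lower_blocks_leq k u v : 2 <= k -> size u = size v ->
  all (fun x => x <= k) u -> all (fun x => x <= k) v ->
  count_mem k u + count_mem k v + (l1_dist (lower_blocks k u) (lower_blocks k v)).*2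
    <= size u * k.*2.-1.
Proof.
move=> k_ge2; elim: u v => [|a u IH] [|b v] //= [size_uv] /andP[a_le u_le] /andP[b_le v_le].
have := IH v size_uv u_le v_le.
by case: eqP => a_k; case: eqP => b_k /=; lia.
Qed.

Lemma pell_dist_le n k u v : 2 <= k -> pell_vertex n k u -> pell_vertex n k v ->
  dist_le k u v (n * k - uphalf n).
Proof.
move=> k_ge2 [u_pell size_u] [v_pell size_v]; have k_gt0 : 0 < k by lia.
have [u_le v_le] := (is_pell_leq u_pell, is_pell_leq v_pell).
set d := l1_dist (lower_blocks k u) (lower_blocks k v).
have low_walk : walk k (lower_blocks k u) (lower_blocks k v) d.
  by apply: walk_l1_dist; rewrite ?size_map ?size_u ?size_v ?lower_blocks_ltn.
exists ((count_mem k u)./2 + d + (count_mem k v)./2); last first.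
  apply: walk_trans (walk_trans (walk_lower_blocks _ u_pell) low_walk) _ => //.
  exact/walk_sym/walk_lower_blocks.
have := count_l1_lower_blocks_leq k_ge2 (etrans size_u (esym size_v)) u_le v_le.
rewrite size_u -/d uphalf_half -!divn2 -!muln2.
by have := odd_double_half n; have := leq_b1 (odd n); lia.
Qed.

Definition pell_top n k : seq nat := nseq (odd n) k.-1 ++ nseq n./2.*2 k.

Lemma pell_vertex_top n k : 0 < k -> pell_vertex n k (pell_top n k).
Proof.
move=> k_gt0; split; last by rewrite size_cat !size_nseq odd_double_half.
apply: is_pell_cat; first by apply: is_pell_ltn; rewrite all_nseq; lia.
by elim: n./2 => // h; rewrite doubleS is_pell_cons_kk.
Qed.

Lemma pell_vertex_zero n k : 0 < k -> pell_vertex n k (nseq n 0).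
Proof.
move=> k_gt0; split; rewrite ?size_nseq //.
by apply: is_pell_ltn; rewrite all_nseq k_gt0 orbT.
Qed.

Lemma pell_weight_top n k : 0 < k ->
  pell_weight k (pell_top n k) = (n * k - uphalf n).*2.
Proof.
move=> k_gt0; rewrite pell_weight_cat !pell_weight_nseq letter_weight_k.
rewrite letter_weight_ltn ?uphalf_half; last lia.
rewrite -{3}(odd_double_half n).
by case: k k_gt0 => // k _; case: (odd n); move: n./2 => h /=; nia.
Qed.

Lemma pell_dist_zero_top n k m : 0 < k ->
  dist_le k (nseq n 0) (pell_top n k) m -> n * k - uphalf n <= m.
Proof.
move=> k_gt0 [m' m'_le /pell_weight_walk].
by rewrite pell_weight_top // pell_weight_nseq letter_weight_ltn //; lia.
Qed.

Theorem proposition4p3 (n k : nat) (hn : 1 <= n) (hk : 2 <= k) :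
  pell_diam_is n k (n * k - uphalf n).
Proof.
have k_gt0 : 0 < k by lia.
move=> m; split=> [all_le | diam_le u v u_vtx v_vtx].
  exact: pell_dist_zero_top k_gt0
    (all_le _ _ (pell_vertex_zero n k_gt0) (pell_vertex_top n k_gt0)).
by have [d d_le u_v] := pell_dist_le hk u_vtx v_vtx; exists d => //; lia.
Qed.
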